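(* Let $L_n$ and $PL_n$ be as in the context and $n\ge 4$. The homomorphism $\phi_n:L_n\to\operatorname{Aut}(PL_n)$, $\phi_n(g)(x)=g^{-1}xg$ for $x\in PL_n$, is injective.
   Context: For $n\ge 2$, $L_n=\langle y_1,\dots,y_{n-1}\mid y_j^2=1\ (1\le j\le n-1),\ y_iy_{i+1}y_i=y_{i+1}y_iy_{i+1}\ (1\le i\le n-2)\rangle$ (no relations between $y_i,y_j$ with $|i-j|\ge 2$). Let $\pi:L_n\to S_n$ be the surjective homomorphism with $\pi(y_i)=(i\ i{+}1)$, the transposition, and $PL_n=\ker\pi$ (a normal subgroup, so conjugation restricts to automorphisms of $PL_n$). *)

(* L_n is presented concretely: elements are words in the
   generators y_0..y_{n-2} (indexed by 'I_n.-1), modulo the congruence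
   generated by the defining relations. Since every generator is an
   involution, positive words suffice, and the inverse of a word is its
   reversal. *)
From mathcomp Require Import all_boot all_fingroup.
Set Implicit Arguments. Unset Strict Implicit. Unset Printing Implicit Defensive.

(* words in the generators of L_n; generator y_{i+1} of the paper is index i *)
Definition word (n : nat) := seq 'I_n.-1.

Inductive Lrel (n : nat) : word n -> word n -> Prop :=
| Lrel_refl u : Lrel u u
| Lrel_sym u v : Lrel u v -> Lrel v u
| Lrel_trans u v w : Lrel u v -> Lrel v w -> Lrel u w
| Lrel_ctx u v a b : Lrel a b -> Lrel (u ++ a ++ v) (u ++ b ++ v)
| Lrel_inv (i : 'I_n.-1) : Lrel [:: i; i] [::]
| Lrel_braid (i j : 'I_n.-1) : val j = (val i).+1 -> Lrel [:: i; j; i] [:: j; i; j].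

Definition Linv (n : nat) (g : word n) : word n := rev g.

Lemma gen_lt (n : nat) (i : 'I_n.-1) : val i < n.
Proof. by case: n i => [|n] [i /= Hi] //; apply: leq_trans Hi _. Qed.

Lemma gen_succ_lt (n : nat) (i : 'I_n.-1) : (val i).+1 < n.
Proof. by case: n i => [|n] [i /= Hi] //. Qed.

Definition gen_perm (n : nat) (i : 'I_n.-1) : 'S_n :=
  tperm (Ordinal (gen_lt i)) (Ordinal (gen_succ_lt i)).

Definition piL (n : nat) (w : word n) : 'S_n :=
  (\prod_(i <- w) gen_perm i)%g.

Definition inPL (n : nat) (w : word n) : Prop := piL w = 1%g.

From mathcomp Require Import all_boot all_fingroup.
From mathcomp Require Import zify.
Set Implicit Arguments. Unset Strict Implicit. Unset Printing Implicit Defensive.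

(* If g and h induce the same automorphism of PL_n, then z = h g^-1 commutes
   with every element of PL_n, and it suffices to prove z = 1.  We solve the
   word problem of L_n by a complete rewriting system: letters are natural
   numbers (letter i stands for y_(i+1)) and the relations are oriented as
   i i -> 1 and (i+1) i (i+1) -> i (i+1) i.  The irreducible ("reduced") words
   are normal forms: [act i w] computes the reduced form of i w from a reduced
   w, it is an involution and satisfies the braid relation, so it is an action
   of L_n on reduced words and [Lnf w], the reduced form of w, is a complete
   invariant of the class of w.  Reducedness is a local condition on windows of
   three letters, which controls when a concatenation of reduced words is
   reduced.  Finally, for every first letter f and last letter l of a
   nonempty reduced word Z we exhibit a word X in y_1, y_2, y_3 lying in PL_4
   such that Z X and X Z are both reduced but differ in their first or last
   letter.  Hence Lnf z = [::] and z = 1. *)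

(* The forbidden factor (b+1) b (b+1) reads [peak (b+1) b (b+1)]. *)
Definition peak (a b c : nat) : bool := (a == c) && (a == b.+1).

Definition head_ok (a : nat) (w : seq nat) : bool :=
  if w is b :: w' then (a != b) && (if w' is c :: _ then ~~ peak a b c else true)
  else true.

Fixpoint reduced (w : seq nat) : bool :=
  if w is a :: w' then head_ok a w' && reduced w' else true.

Lemma reduced_cons2 (a b : nat) (w : seq nat) : reduced [:: a, b & w] =
  [&& a != b, (if w is c :: _ then ~~ peak a b c else true) & reduced (b :: w)].
Proof. by rewrite andbA. Qed.

Lemma reduced_behead (a : nat) (w : seq nat) : reduced (a :: w) -> reduced w.
Proof. by case/andP. Qed.

Lemma reduced_neq (a b : nat) (w : seq nat) : reduced [:: a, b & w] -> a != b.
Proof. by rewrite reduced_cons2 => /andP []. Qed.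

Lemma reduced_peak (a b c : nat) (w : seq nat) :
  reduced [:: a, b, c & w] -> ~~ peak a b c.
Proof. by rewrite reduced_cons2 => /and3P []. Qed.

(* Left multiplication by the letter i on reduced words: i cancels against a
   leading i, and i (i-1) i w'' is rewritten to (i-1) i ((i-1) w''). *)
Fixpoint act (i : nat) (w : seq nat) : seq nat :=
  match w with
  | [::] => [:: i]
  | j :: w' =>
    if j == i then w'
    else if j.+1 == i then
      if w' is k :: w'' then if k == i then j :: i :: act j w'' else i :: w
      else i :: w
    else i :: w
  end.

Lemma nSn (i : nat) : (i.+1 == i) = false. Proof. by elim: i. Qed.
Lemma nnS (i : nat) : (i == i.+1) = false. Proof. by elim: i. Qed.
Lemma nSSn (i : nat) : (i.+2 == i) = false. Proof. by elim: i. Qed.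
Lemma nnSS (i : nat) : (i == i.+2) = false. Proof. by elim: i. Qed.

Lemma act_nil (i : nat) : act i [::] = [:: i]. Proof. by []. Qed.

Lemma act_consE (i c : nat) (s : seq nat) : act i (c :: s) =
  if c == i then s
  else if (c.+1 == i) && (head i.+1 s == i) then c :: i :: act c (behead s)
  else i :: c :: s.
Proof.
rewrite /=; case: (c == i) => //; case: (c.+1 == i) => //=.
by case: s => [|d s] /=; rewrite ?nSn.
Qed.

Arguments act : simpl never.

Ltac use_neq := repeat match goal with
 | H : is_true (?a != ?b) |- context [?a == ?b] => rewrite (negbTE H)
 | H : is_true (?a != ?b) |- context [?b == ?a] => rewrite [b == a]eq_sym (negbTE H)
 end.
Ltac simp_act :=
  repeat progress (rewrite ?act_nil ?act_consE /= ?eqxx ?eqSS ?nSn ?nnS ?nSSn /=;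
                   use_neq).

Lemma act_reduced_cons (i : nat) (w : seq nat) : reduced (i :: w) -> act i w = i :: w.
Proof.
case: w => [|d s] Hn; first by [].
have Hd : d != i by rewrite eq_sym; exact: reduced_neq Hn.
rewrite act_consE (negbTE Hd); case: s Hn => [|e s] Hn /=; first by rewrite nSn andbF.
case: (eqVneq d.+1 i) => [E|] //=; case: (eqVneq e i) => [E'|] //=.
by move: (reduced_peak Hn); rewrite /peak E E' !eqxx.
Qed.

Lemma act_invol (i : nat) (w : seq nat) : reduced w -> act i (act i w) = w.
Proof.
move: {2}(size w) (leqnn (size w)) => m; elim: m i w => [|m IH] i w.
  by case: w => // _ _; simp_act.
case: w => [|c s] Hs Hn; first by simp_act.
rewrite [act i (c :: s)]act_consE.
case: (eqVneq c i) => [<-|Hci]; first by rewrite act_reduced_cons.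
case: (eqVneq c.+1 i) => [Ei|Hci1] /=; last by simp_act.
subst i; case: s Hs Hn => [|d s] Hs Hn /=; first by simp_act.
case: (eqVneq d c.+1) => [Ed|Hd] /=; last by simp_act.
subst d; rewrite act_consE /= nnS eqxx /= IH //.
  by move: Hs => /=; lia.
exact: reduced_behead (reduced_behead Hn).
Qed.

Lemma reduced_ascent (c : nat) (t : seq nat) :
  reduced [:: c, c.+1 & t] = reduced (c.+1 :: t).
Proof. by rewrite reduced_cons2 nnS; case: t => // x t; rewrite /peak nnSS andbF. Qed.

(* One step of the inductive proof of [act_reduced]: in the braid case the
   recursive call [act c s] happens behind the letter c+1. *)
Lemma act_reduced_below (c : nat) (s : seq nat) :
  reduced (c.+1 :: s) -> reduced (act c s) -> reduced (c.+1 :: act c s).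
Proof.
move=> Hs Ha; rewrite /= Ha andbT.
case: s Hs {Ha} => [|e s] Hs; first by rewrite act_nil /= nSn.
rewrite act_consE; case: (eqVneq e c) => [Eec|Hec].
  subst e; case: s Hs => [|f s] Hs //=.
  have Hcf : c != f by apply: reduced_neq (reduced_behead Hs).
  move: (reduced_peak Hs); rewrite /peak eqxx andbT => Hc1f.
  by rewrite Hc1f; case: s Hs => // g s _; rewrite /peak eqSS (negbTE Hcf) andbF.
case: ifP => [/andP [/eqP Eec _]|_] /=; first by rewrite -Eec nSSn /peak eqSS nSn.
by rewrite nSn /peak eqxx andbT (reduced_neq Hs).
Qed.

Lemma act_reduced (i : nat) (w : seq nat) : reduced w -> reduced (act i w).
Proof.
move: {2}(size w) (leqnn (size w)) => m; elim: m i w => [|m IH] i w.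
  by case: w.
case: w => [|c s] Hs Hn //; rewrite act_consE.
case: (eqVneq c i) => [_|Hci]; first exact: reduced_behead Hn.
case: ifP => [/andP [/eqP Eci Es]|Hbr].
  subst i; case: s Hs Hn Es => [|d s] Hs Hn Es; first by rewrite /= nSn in Es.
  have Ed : d = c.+1 by exact/eqP.
  subst d.
  rewrite reduced_ascent act_reduced_below ?(reduced_behead Hn) //.
  by apply: IH; [move: Hs => /=; lia | exact: reduced_behead (reduced_behead Hn)].
rewrite reduced_cons2 Hn andbT eq_sym Hci; case: s Hn Hbr {Hs} => // e s _ /= Hbr.
by rewrite /peak [i == e]eq_sym [i == c.+1]eq_sym andbC Hbr.
Qed.

Lemma act_braid (i : nat) (w : seq nat) : reduced w ->
  act i (act i.+1 (act i w)) = act i.+1 (act i (act i.+1 w)).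
Proof.
case: w => [|c s] Hn; first by simp_act.
case: (eqVneq c i) => [Eci|Hci]; first subst c.
  case: s Hn => [|d s] Hn; first by simp_act.
  have Hdi : d != i by rewrite eq_sym; exact: reduced_neq Hn.
  by case: (eqVneq d i.+1) => [->|Hdk]; simp_act.
case: (eqVneq c i.+1) => [Eci|Hck]; first subst c.
  case: s Hn => [|d s] Hn; first by simp_act.
  have Hdk : d != i.+1 by rewrite eq_sym; exact: reduced_neq Hn.
  case: (eqVneq d i) => [Edi|Hdi]; first subst d.
    case: s Hn => [|e s] Hn; first by simp_act.
    have He1 : e != i.+1.
      by move: (reduced_peak Hn); rewrite /peak eqxx andbT eq_sym.
    have He2 : e != i by rewrite eq_sym; exact: reduced_neq (reduced_behead Hn).
    by simp_act.
  by simp_act; case: ifP => _; simp_act.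
case: (eqVneq c.+1 i) => [Eci|Hci1]; first subst i.
  case: s Hn => [|d s] Hn; first by simp_act.
  by case: (eqVneq d c.+1) => [Edi|Hdi]; [subst d|]; simp_act.
by simp_act.
Qed.

Definition lasts2 (w : seq nat) : seq nat := drop (size w - 2) w.

Lemma head_ok_cat (a : nat) (u v : seq nat) : head_ok a (u ++ v) -> head_ok a u.
Proof. by case: u => [|b [|c u]] //=; case: v => [|c v] //= /andP [-> _]. Qed.

Lemma head_ok_take2 (a : nat) (u v : seq nat) :
  head_ok a (u ++ v) = head_ok a (u ++ take 2 v).
Proof. by case: u => [|x [|y u]] //=; case: v => [|b [|c v]]. Qed.

Lemma reduced_prefix (u v : seq nat) : reduced (u ++ v) -> reduced u.
Proof.
elim: u => [|a u IH] //= /andP [Ha Hr].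
by rewrite (head_ok_cat Ha) (IH Hr).
Qed.

Lemma reduced_catr (u v : seq nat) :
  reduced (u ++ v) = reduced (u ++ take 2 v) && reduced v.
Proof.
elim: u => [|a u IH] /=.
  have [Hv|Hv] := boolP (reduced v); last by rewrite andbF.
  by rewrite andbT (@reduced_prefix _ (drop 2 v)) // cat_take_drop.
by rewrite IH andbA head_ok_take2.
Qed.

Lemma reduced_catl (u v : seq nat) :
  reduced (u ++ v) = reduced u && reduced (lasts2 u ++ v).
Proof.
elim: u => [|a u IH] //.
case: u IH => [|b [|c u]] IH.
- by rewrite /lasts2.
- by rewrite /lasts2 /=; case: (a == b).
have -> : lasts2 [:: a, b, c & u] = lasts2 [:: b, c & u] by rewrite /lasts2 /= !subSS subn0.
have -> : reduced ([:: a, b, c & u] ++ v) =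
  head_ok a [:: b, c & u] && reduced ([:: b, c & u] ++ v) by [].
by rewrite IH andbA.
Qed.

Lemma reduced_suffix (u v : seq nat) : reduced (u ++ v) -> reduced v.
Proof. by rewrite reduced_catr => /andP []. Qed.

(* Among the left neighbours y of l, the most restrictive one is l+1 ... *)
Lemma reduced_swap_left (y l : nat) (w : seq nat) : y != l ->
  reduced [:: l.+1, l & w] -> reduced [:: y, l & w].
Proof.
rewrite !reduced_cons2 => Hyl /and3P [_ Hpeak ->]; rewrite Hyl andbT.
case: w Hpeak => // c w; rewrite /peak.
by case: (eqVneq y l.+1) => [->|_]; rewrite ?eqxx ?andbF.
Qed.

(* ... and among the right neighbours y of f, it is f+1. *)
Lemma reduced_swap_right (u : seq nat) (f y : nat) : y != f ->
  reduced (u ++ [:: f; f.+1]) -> reduced (u ++ [:: f; y]).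
Proof.
move=> Hyf; elim: u => [|a u IH] /=; first by move=> _; rewrite eq_sym Hyf.
move=> /andP [Ha /IH ->]; rewrite andbT.
case: u {IH} Ha => [|b [|c u]] //=.
rewrite /peak andbb => /andP [-> Ha] /=.
by rewrite (negbTE Ha) andbF.
Qed.

Lemma reduced_join_left (u : seq nat) (l : nat) (X : seq nat) :
  reduced (rcons u l) -> reduced [:: l.+1, l & X] -> reduced (rcons u l ++ X).
Proof.
case/lastP: u => [|u y] Hu HX; first exact: reduced_behead HX.
have E : rcons (rcons u y) l = u ++ [:: y; l] by rewrite -!cats1 -catA.
rewrite reduced_catl Hu E /lasts2 size_cat addn2 !subSS subn0 drop_size_cat //=.
by apply: reduced_swap_left HX; rewrite E in Hu; apply: reduced_neq (reduced_suffix Hu).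
Qed.

Lemma reduced_join_right (X : seq nat) (f : nat) (v : seq nat) :
  reduced (X ++ [:: f; f.+1]) -> reduced (f :: v) -> reduced (X ++ f :: v).
Proof.
move=> HX Hv; rewrite reduced_catr Hv andbT.
case: v Hv => [|y v] Hv /=.
  by move: HX; rewrite -[[:: f; f.+1]]/([:: f] ++ [:: f.+1]) catA => /reduced_prefix.
by rewrite take0; apply: reduced_swap_right HX; rewrite eq_sym; apply: reduced_neq Hv.
Qed.

Lemma foldr_act_reduced (t : seq nat) : reduced t -> forall w, reduced (foldr act t w).
Proof. by move=> Ht; elim=> [|a w IH] //=; apply: act_reduced. Qed.

Lemma foldr_act_id (v t : seq nat) : reduced (v ++ t) -> foldr act t v = v ++ t.
Proof.
elim: v => [|a v IH] //= H.
by rewrite IH ?(reduced_behead H) // act_reduced_cons.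
Qed.

Section WordProblem.
Variable n : nat.
Implicit Types (u v w : word n) (a : 'I_n.-1).

Lemma Lrel_catl u v w : Lrel v w -> Lrel (u ++ v) (u ++ w).
Proof. by move=> H; have := Lrel_ctx u [::] H; rewrite !cats0. Qed.

Lemma Lrel_catr u v w : Lrel v w -> Lrel (v ++ u) (w ++ u).
Proof. exact: (Lrel_ctx [::] u). Qed.

Lemma Lrel_cons a v w : Lrel v w -> Lrel (a :: v) (a :: w).
Proof. exact: (Lrel_catl [:: a]). Qed.

Lemma Lrel_rev w : Lrel (w ++ rev w) [::].
Proof.
elim: w => [|a w IH] /=; first exact: Lrel_refl.
rewrite rev_cons -cats1 catA.
apply: Lrel_trans (Lrel_cons a (Lrel_catr [:: a] IH)) _.
exact: Lrel_inv.
Qed.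

Definition Lnf w : seq nat := foldr act [::] (map val w).

Lemma Lrel_act u v : Lrel u v -> forall t, reduced t ->
  foldr act t (map val u) = foldr act t (map val v).
Proof.
elim=> {u v}.
- by [].
- by move=> u v _ IH t Ht; rewrite IH.
- by move=> u v w _ IH1 _ IH2 t Ht; rewrite IH1 // IH2.
- move=> u v x y _ IH t Ht; rewrite !map_cat !foldr_cat IH //.
  exact: foldr_act_reduced.
- by move=> a t Ht /=; rewrite act_invol.
- by move=> a b E t Ht /=; rewrite E act_braid.
Qed.

Lemma act_lift a w :
  exists2 w' : word n, map val w' = act a (map val w) & Lrel (a :: w) w'.
Proof.
move: {2}(size w) (leqnn (size w)) => m; elim: m a w => [|m IH] a w.
  by case: w => // _; exists [:: a]; last exact: Lrel_refl.
case: w => [|c s] Hs; first by exists [:: a]; last exact: Lrel_refl.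
rewrite /= act_consE.
case: (eqVneq (val c) (val a)) => [/val_inj ->|_].
  by exists s; last exact: (Lrel_ctx [::] s (@Lrel_inv n a)).
case: s Hs => [|d s] Hs /=.
  by rewrite nSn andbF; exists [:: a; c]; last exact: Lrel_refl.
case: (eqVneq (val c).+1 (val a)) => [Eca|_]; last first.
  by exists [:: a, c, d & s]; last exact: Lrel_refl.
case: (eqVneq (val d) (val a)) => [/val_inj Eda|_]; last first.
  by exists [:: a, c, d & s]; last exact: Lrel_refl.
subst d; have [s' Es' Hs'] := IH c s (leq_trans (leqnSn _) Hs).
exists [:: c, a & s']; first by rewrite /= Es'.
apply: Lrel_trans (Lrel_cons c (Lrel_cons a Hs')).
exact: (Lrel_ctx [::] s (Lrel_sym (@Lrel_braid n c a (esym Eca)))).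
Qed.

Lemma Lnf_lift w : exists2 w' : word n, map val w' = Lnf w & Lrel w w'.
Proof.
elim: w => [|a w [w' Ew' Hw]]; first by exists [::]; last exact: Lrel_refl.
have [w'' Ew'' Hw''] := act_lift a w'.
exists w''; first by rewrite Ew'' Ew'.
exact: Lrel_trans (Lrel_cons a Hw) Hw''.
Qed.

Lemma Lnf_reduced w : reduced (Lnf w).
Proof. exact: foldr_act_reduced. Qed.

Lemma Lnf_sound u v : Lrel u v -> Lnf u = Lnf v.
Proof. by move=> H; apply: Lrel_act. Qed.

Lemma Lnf_complete u v : Lnf u = Lnf v -> Lrel u v.
Proof.
have [u' Eu Hu] := Lnf_lift u; have [v' Ev Hv] := Lnf_lift v.
rewrite -Eu -Ev => /(inj_map val_inj) Euv.
by apply: Lrel_trans Hu _; rewrite Euv; apply: Lrel_sym.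
Qed.

Lemma Lnf_id w : reduced (map val w) -> Lnf w = map val w.
Proof. by move=> H; rewrite /Lnf foldr_act_id ?cats0. Qed.

Lemma Lnf_cat u v : reduced (Lnf u ++ Lnf v) -> Lnf (u ++ v) = Lnf u ++ Lnf v.
Proof.
move=> H; have [u' Eu Hu] := Lnf_lift u.
rewrite /Lnf map_cat foldr_cat -/(Lnf v) (Lrel_act Hu (Lnf_reduced v)) Eu.
exact: foldr_act_id.
Qed.

Lemma Lnf_commute u v : Lrel (u ++ v) (v ++ u) ->
  reduced (Lnf u ++ map val v) -> reduced (map val v ++ Lnf u) ->
  Lnf u ++ map val v = map val v ++ Lnf u.
Proof.
move=> Huv HUV HVU; have Ev := Lnf_id (reduced_suffix HUV).
rewrite -Ev in HUV HVU *.
by rewrite -Lnf_cat // (Lnf_sound Huv) Lnf_cat.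
Qed.

Lemma conj_commute (g h : word n) v : Lrel (Linv g ++ v ++ g) (Linv h ++ v ++ h) ->
  Lrel ((h ++ rev g) ++ v) (v ++ (h ++ rev g)).
Proof.
rewrite /Linv => H.
apply: (@Lrel_trans n _ ((h ++ rev g ++ v ++ g) ++ rev g)).
  have := Lrel_catl (h ++ rev g ++ v) (Lrel_sym (Lrel_rev g)).
  by rewrite cats0 !catA.
apply: (@Lrel_trans n _ ((h ++ rev h ++ v ++ h) ++ rev g)).
  exact: Lrel_catr (Lrel_catl h H).
have := Lrel_catr (v ++ h ++ rev g) (Lrel_rev h).
by rewrite !catA.
Qed.

Lemma inv_trivial (g h : word n) : Lrel (h ++ rev g) [::] -> Lrel g h.
Proof.
move=> H; apply: (@Lrel_trans n _ (h ++ rev g ++ g)).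
  by rewrite catA; apply: Lrel_sym (Lrel_catr g H).
by have := Lrel_catl h (Lrel_rev (rev g)); rewrite revK cats0.
Qed.
End WordProblem.

(* The transposition (a a+1) of nat, and the right action of a word on nat:
   [wact w] is the permutation pi(w) extended by the identity. *)
Definition swap (a y : nat) : nat := if y == a then a.+1 else if y == a.+1 then a else y.

Definition wact (X : seq nat) (y : nat) : nat := foldl (fun y a => swap a y) y X.

Lemma piL_val (n : nat) (w : word n) (x : 'I_n) : val (piL w x) = wact (map val w) (val x).
Proof.
elim: w x => [|a w IH] x; first by rewrite /piL big_nil perm1.
rewrite /piL big_cons permM -/(piL w) IH /=; congr wact.
rewrite /gen_perm /swap; case: tpermP => [->|->|Hx Hy] /=.
- by rewrite eqxx.
- by rewrite nSn eqxx.
case: eqP => [E|_]; first by case: Hx; apply: val_inj.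
by case: eqP => [E|_] //; case: Hy; apply: val_inj.
Qed.

Lemma wact_large (X : seq nat) (k y : nat) :
  all (fun a => a < k) X -> k < y -> wact X y = y.
Proof.
elim: X y => [|a X IH] y //= /andP [Ha HX] Hy.
have -> : swap a y = y.
  rewrite /swap; case: eqP => [E|_]; first by lia.
  by case: eqP => [E|_] //; lia.
exact: IH.
Qed.

Lemma inPL_fixes (n k : nat) (w : word n) : all (fun a => a < k) (map val w) ->
  all (fun y => wact (map val w) y == y) (iota 0 k.+1) -> inPL w.
Proof.
move=> Hw Hfix; apply/permP => x; apply: val_inj.
rewrite piL_val perm1; case: (ltnP (val x) k.+1) => Hx.
  by move/allP: Hfix => /(_ (val x)); rewrite mem_iota => /(_ Hx) /eqP.
exact: wact_large Hw Hx.
Qed.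

Lemma map_val_inord (k : nat) (X : seq nat) : all (fun a => a < k.+1) X ->
  map val (map (@inord k) X) = X.
Proof. by elim: X => [|a X IH] //= /andP [Ha HX]; rewrite inordK // IH. Qed.

(* X is a word in y_1, y_2, y_3 representing an element of PL_4 (hence of
   PL_n for every n >= 4). *)
Definition pure3 (X : seq nat) : bool :=
  all (fun a => a < 3) X && all (fun y => wact X y == y) (iota 0 4).

(* X witnesses that no nonempty reduced word starting with f and ending with
   l commutes with PL_n: X is pure, glues on both sides of such a word, and
   its first or last letter differs from f or l respectively. *)
Definition witness (f l : nat) (X : seq nat) : bool :=
  [&& X != [::], pure3 X,
      reduced [:: l.+1, l & X], reduced (X ++ [:: f; f.+1])
    & (head 0 X != f) || (last 0 X != l)].

(* A witness for every pair (first letter, last letter); the long words handle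
   the pairs where the short commutators (y_1 y_3)^2 and (y_3 y_1)^2 fail. *)
Definition witness_word (f l : nat) : seq nat :=
  match f, l with
  | 0, 0 => [:: 2; 0; 1; 0; 2; 0; 2; 1; 0; 2]
  | 0, 2 => [:: 1; 0; 2; 0; 1; 0; 2; 0; 1; 2]
  | 1, 1 => [:: 0; 2; 0; 1; 0; 2; 0; 2; 1; 0; 2; 0]
  | 1, 2 => [:: 0; 1; 2; 1; 0; 2; 0; 1; 2; 0]
  | 2, 0 => [:: 2; 0; 2; 0; 1; 2; 0; 2; 0; 1]
  | 2, 1 => [:: 0; 2; 0; 1; 2; 1; 0; 2; 0; 1]
  | 2, 2 => [:: 0; 1; 0; 2; 0; 2; 1; 0]
  | _, 0 | 1, _ | 2, _ => [:: 2; 0; 2; 0]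
  | _, _ => [:: 0; 2; 0; 2]
  end.

(* All letters f, l >= 3 behave alike, so the table is checked by computation. *)
Lemma witness_wordP (f l : nat) : witness f l (witness_word f l).
Proof.
by case: f => [|[|[|f]]]; case: l => [|[|[|l]]]; rewrite /witness /= ?eqSS ?nSn ?nnS.
Qed.

Lemma witness_noncommute (Z X : seq nat) : reduced Z -> Z != [::] ->
  witness (head 0 Z) (last 0 Z) X ->
  [/\ reduced (Z ++ X), reduced (X ++ Z) & Z ++ X != X ++ Z].
Proof.
move=> HZ Z0 /and5P [X0 _ HL HR Hd].
split.
- case/lastP: Z HZ Z0 HL {HR Hd} => [//|u l] HZ _.
  by rewrite last_rcons; apply: reduced_join_left.
- case: Z HZ Z0 HR {HL Hd} => [//|f v] HZ _ HR.
  exact: reduced_join_right.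
apply/eqP => E; move: Hd.
have head_catl (s t : seq nat) : s != [::] -> head 0 (s ++ t) = head 0 s by case: s.
have last_catr (s t : seq nat) : t != [::] -> last 0 (s ++ t) = last 0 t.
  by rewrite last_cat; case: t.
by rewrite -(head_catl Z X Z0) -(last_catr Z X X0) E head_catl // last_catr // !eqxx.
Qed.

Theorem theorem5p4 (n : nat) (hn : 4 <= n) (g h : word n) :
  (forall x : word n, inPL x ->
     Lrel (Linv g ++ x ++ g) (Linv h ++ x ++ h)) ->
  Lrel g h.
Proof.
case: n hn g h => [|[|[|[|m]]]] // _ g h Hconj.
apply: inv_trivial; set z := h ++ rev g.
apply: Lnf_complete; apply/eqP; apply: contraT => Z0.
pose X := witness_word (head 0 (Lnf z)) (last 0 (Lnf z)).
have HX : witness (head 0 (Lnf z)) (last 0 (Lnf z)) X := witness_wordP _ _.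
have [HZX HXZ Hne] := witness_noncommute (Lnf_reduced z) Z0 HX.
case/and5P: HX => _ /andP [HX3 HXfix] _ _ _.
pose x : word m.+4 := map (@inord m.+2) X.
have Ex : map val x = X.
  by apply: map_val_inord; apply: sub_all HX3 => a /= Ha; lia.
have Hx : inPL x by apply: (@inPL_fixes _ 3); rewrite Ex.
rewrite -Ex in HZX HXZ Hne.
by case/eqP: Hne; apply: Lnf_commute HZX HXZ; apply: conj_commute (Hconj x Hx).
Qed.
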